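(* Let $R>0$ and $\Theta=(\alpha,\rho_r,\rho_d,\rho_s,\rho_0,T)$ with $\alpha>1$, $\rho_r,\rho_d,\rho_s,\rho_0>0$, $T>1$. There exists a unique $x'(R,\Theta)\ge0$ such that $$g(x'(R,\Theta))=\Big(1+\frac{\rho_d}{\rho_r}\Big)\sqrt{\frac{R\rho_r}{\alpha}}.$$ Moreover, if $K_{max}(\Theta):=\min\big(\frac T4,\frac{\rho_r}{3\rho_0},\frac{3\rho_d}{2\rho_0}\big)>10$, then the maximizer of $\zeta_{csi}(M,K,R,\Theta)$ over real $(M,K)$ with $1\le K\le K_{max}(\Theta)$ and $M>K$ is $$K'_{csi}(R,\Theta)=\max\Big(\min\Big(\frac{R}{x'(R,\Theta)},K_{max}(\Theta)\Big),1\Big),\qquad M'_{csi}(R,\Theta)=K'_{csi}+\sqrt{K'_{csi}}\sqrt{\frac{\alpha\,(2^{R/K'_{csi}}-1)}{\rho_r}}.$$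
   Context: $g(x)=\sqrt{\frac{x}{2^x-1}}\big(2^x x\ln2-2^x+1\big)$ for $x>0$, with $g(0)=0$ (its limit). For real $M>K\ge1$, $$\frac{1}{\zeta_{csi}(M,K,R,\Theta)}=\frac1R\Big[\frac{\alpha K}{M-K}\big(2^{R/K}-1\big)+M\rho_r+K\rho_d+\rho_s\Big].$$ *)

From Stdlib Require Import Reals Lra.
Open Scope R_scope.

Definition pow2 (x : R) : R := Rpower 2 x.

(* g(x) = sqrt(x/(2^x-1)) (2^x x ln2 - 2^x + 1) for x > 0, g(0) = 0 (its limit).
   Only used on x >= 0; the value at x = 0 is the stated convention. *)
Definition g (x : R) : R :=
  if Req_EM_T x 0 then 0
  else sqrt (x / (pow2 x - 1)) * (pow2 x * x * ln 2 - pow2 x + 1).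

Definition inv_zeta_csi (alpha rho_r rho_d rho_s : R) (M K Rr : R) : R :=
  / Rr * (alpha * K / (M - K) * (pow2 (Rr / K) - 1) + M * rho_r + K * rho_d + rho_s).

Definition zeta_csi (alpha rho_r rho_d rho_s : R) (M K Rr : R) : R :=
  / inv_zeta_csi alpha rho_r rho_d rho_s M K Rr.

Definition K_max (rho_r rho_d rho_0 T : R) : R :=
  Rmin (T / 4) (Rmin (rho_r / (3 * rho_0)) (3 * rho_d / (2 * rho_0))).

Definition K'_csi (x' Rr Kmax : R) : R := Rmax (Rmin (Rr / x') Kmax) 1.

Definition M'_csi (alpha rho_r K' Rr : R) : R :=
  K' + sqrt K' * sqrt (alpha * (pow2 (Rr / K') - 1) / rho_r).

From Stdlib Require Import Reals Lra.
From Coquelicot Require Import Hierarchy Derive ElemFct AutoDerive.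
Open Scope R_scope.

(* Put [P K := K (2^(R/K) - 1)].  Completing the square in [M - K] gives
   [R / zeta_csi M K = c K + rho_s + (sqrt (alpha P K) - sqrt rho_r (M - K))^2 / (M - K)]
   with [c K = 2 sqrt (alpha rho_r P K) + (rho_r + rho_d) K], so for fixed [K] the best [M] is
   [M'_csi K].  Since [d/dK sqrt (P K) = - g (R/K) / (2 sqrt R)], the derivative of [c] is a
   positive multiple of [g x' - g (R/K)], where [g x'] is the threshold of the statement.
   The function [g] increases from 0 to infinity on (0, oo) (its square has a derivative of
   explicit sign), so [x'] exists and is unique, and [c] decreases up to [R/x'] and increases
   after it: its minimum on [[1, K_max]] is the projection of [R/x'] onto that interval. *)

Lemma ln2_pos : 0 < ln 2.
Proof. rewrite <- ln_1; apply ln_increasing; lra. Qed.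

Lemma pow2_exp x : pow2 x = exp (x * ln 2).
Proof. reflexivity. Qed.

Lemma pow2_gt_1 x : 0 < x -> 1 < pow2 x.
Proof.
  intros Hx; rewrite <- (Rpower_O 2) by lra; apply Rpower_lt; lra.
Qed.

Lemma one_add_le_pow2 x : 1 + x * ln 2 <= pow2 x.
Proof. apply exp_ineq1_le. Qed.

Lemma derive_neg_decreasing (f df : R -> R) a b : a < b ->
  (forall c, a <= c <= b -> is_derive f c (df c)) ->
  (forall c, a < c < b -> df c < 0) -> f b < f a.
Proof.
  intros Hab Hf Hdf.
  destruct (MVT_cor2 f df a b Hab) as [c [Hc Hac]].
  - intros c Hc; now apply is_derive_Reals, Hf.
  - pose proof (Hdf c Hac); nra.
Qed.

Lemma derive_pos_increasing (f df : R -> R) a b : a < b ->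
  (forall c, a <= c <= b -> is_derive f c (df c)) ->
  (forall c, a < c < b -> 0 < df c) -> f a < f b.
Proof.
  intros Hab Hf Hdf.
  destruct (MVT_cor2 f df a b Hab) as [c [Hc Hac]].
  - intros c Hc; now apply is_derive_Reals, Hf.
  - pose proof (Hdf c Hac); nra.
Qed.

Definition g_factor (x : R) : R := pow2 x * x * ln 2 - pow2 x + 1.

Lemma g_factor_bounds x : 0 < x ->
  0 < g_factor x < x * ln 2 * (pow2 x - 1) /\ g_factor x < x * ln 2 * pow2 x.
Proof.
  intros Hx; unfold g_factor.
  pose proof ln2_pos; pose proof (pow2_gt_1 x Hx).
  assert (Hu : 0 < x * ln 2) by nra.
  assert (HE : 1 + x * ln 2 < pow2 x) by (apply exp_ineq1; lra).
  (* positivity is [pow2 (- x) = exp (- x ln 2) > 1 - x ln 2] *)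
  assert (Hinv : pow2 x * pow2 (- x) = 1).
  { rewrite !pow2_exp, <- exp_plus, <- exp_0; f_equal; ring. }
  assert (1 - x * ln 2 < pow2 (- x)).
  { rewrite pow2_exp; replace (- x * ln 2) with (- (x * ln 2)) by ring.
    apply exp_ineq1; lra. }
  repeat split; nra.
Qed.

Definition gsq (x : R) : R := x / (pow2 x - 1) * g_factor x ^ 2.

Lemma g_sqrt_gsq x : 0 < x -> g x = sqrt (gsq x).
Proof.
  intros Hx; pose proof (pow2_gt_1 x Hx); pose proof (g_factor_bounds x Hx).
  unfold g, gsq; destruct (Req_EM_T x 0) as [->|_]; [lra|].
  rewrite sqrt_mult_alt, sqrt_pow2 by (try apply Rlt_le, Rdiv_lt_0_compat; lra).
  reflexivity.
Qed.

Lemma is_derive_gsq x : 0 < x ->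
  is_derive gsq x (g_factor x * (2 * (x * ln 2) ^ 2 * pow2 x * (pow2 x - 1) - g_factor x ^ 2)
                   / (pow2 x - 1) ^ 2).
Proof.
  intros Hx; pose proof (pow2_gt_1 x Hx).
  unfold gsq, g_factor, pow2, Rpower in *; auto_derive.
  - lra.
  - field; lra.
Qed.

Lemma gsq_increasing x y : 0 < x -> x < y -> gsq x < gsq y.
Proof.
  intros Hx Hxy.
  apply (derive_pos_increasing gsq _ x y Hxy (fun t Ht => is_derive_gsq t ltac:(lra))).
  intros t Ht; assert (Ht0 : 0 < t) by lra.
  pose proof (pow2_gt_1 t Ht0); pose proof ln2_pos.
  destruct (g_factor_bounds t Ht0) as [[HQ HQD] HQE].
  assert (g_factor t ^ 2 < (t * ln 2) ^ 2 * pow2 t * (pow2 t - 1))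
    by (assert (0 < t * ln 2) by nra; nra).
  apply Rdiv_lt_0_compat; [|nra]; apply Rmult_lt_0_compat; nra.
Qed.

Lemma gsq_pos x : 0 < x -> 0 < gsq x.
Proof.
  intros Hx; pose proof (pow2_gt_1 x Hx); pose proof (g_factor_bounds x Hx).
  apply Rmult_lt_0_compat; [apply Rdiv_lt_0_compat|apply pow_lt]; lra.
Qed.

Lemma g_increasing x y : 0 < x -> x < y -> g x < g y.
Proof.
  intros Hx Hxy; rewrite !g_sqrt_gsq by lra.
  apply sqrt_lt_1; [apply Rlt_le, gsq_pos; lra | apply Rlt_le, gsq_pos; lra |].
  now apply gsq_increasing.
Qed.

Lemma gsq_lt_id x : 0 < x <= 1 -> gsq x < x.
Proof.
  intros Hx; pose proof (pow2_gt_1 x (proj1 Hx)) as HE; pose proof ln2_pos.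
  destruct (g_factor_bounds x (proj1 Hx)) as [[HQ HQD] _].
  assert (HE2 : pow2 x <= 2).
  { apply Rle_trans with (pow2 1); [apply Rle_Rpower; lra|].
    unfold pow2; rewrite Rpower_1; lra. }
  assert (x * ln 2 <= pow2 x - 1) by (pose proof (one_add_le_pow2 x); lra).
  assert (pow2 x - 1 <= 1) by lra; assert (0 < pow2 x - 1) by lra.
  unfold gsq; set (D := pow2 x - 1) in *; set (Q := g_factor x) in *.
  (* [Q < x ln 2 * D <= D * D] and [D <= 1] give [gsq x < x * D ^ 3 <= x] *)
  assert (HQD2 : Q < D * D).
  { apply Rlt_le_trans with (x * ln 2 * D); [lra|].
    apply Rmult_le_compat_r; lra. }
  assert (HQ2 : Q ^ 2 < D ^ 4) by nra.
  apply Rlt_le_trans with (x / D * D ^ 4).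
  - apply Rmult_lt_compat_l; [apply Rdiv_lt_0_compat|]; lra.
  - replace (x / D * D ^ 4) with (x * D ^ 3) by (field; lra).
    assert (D ^ 3 <= 1) by (simpl; nra); nra.
Qed.

Lemma gsq_ge_id x : 2 / ln 2 <= x -> x <= gsq x.
Proof.
  intros Hx; pose proof ln2_pos.
  assert (Hu : 2 <= x * ln 2).
  { apply (Rmult_le_compat_r (ln 2)) in Hx; [|lra].
    unfold Rdiv in Hx; rewrite Rmult_assoc, Rinv_l in Hx; lra. }
  assert (Hx0 : 0 < x) by nra.
  pose proof (pow2_gt_1 x Hx0); pose proof (one_add_le_pow2 x).
  unfold gsq, g_factor; set (E := pow2 x) in *.
  (* for [x ln 2 >= 2] the factor dominates [E - 1], so [gsq x >= x (E - 1) >= x] *)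
  assert (HQ : E - 1 <= E * x * ln 2 - E + 1) by nra.
  apply Rle_trans with (x / (E - 1) * (E - 1) ^ 2).
  - replace (x / (E - 1) * (E - 1) ^ 2) with (x * (E - 1)) by (field; lra); nra.
  - apply Rmult_le_compat_l; [apply Rlt_le, Rdiv_lt_0_compat; lra|].
    apply pow_incr; lra.
Qed.

Lemma gsq_continuous x : 0 < x -> continuity_pt gsq x.
Proof.
  intros Hx; apply derivable_continuous_pt.
  eexists; now apply is_derive_Reals, is_derive_gsq.
Qed.

Lemma gsq_surjective c : 0 < c -> exists x, 0 < x /\ gsq x = c.
Proof.
  intros Hc; pose proof ln2_pos.
  set (a := Rmin 1 (c / 2)); set (b := 2 / ln 2 + c).
  assert (Ha : 0 < a <= 1) by (unfold a; split; [apply Rmin_pos|apply Rmin_l]; lra).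
  assert (Hac : a < c) by (pose proof (Rmin_r 1 (c / 2)); unfold a; lra).
  assert (Hb : 0 < 2 / ln 2) by (apply Rdiv_lt_0_compat; lra).
  destruct (Ranalysis5.IVT_interv (fun x => gsq x - c) a b) as [z [Hz Hgz]].
  - intros t Ht; apply continuity_pt_minus; [apply gsq_continuous; lra|].
    apply continuity_pt_const; intros ? ?; reflexivity.
  - unfold b; lra.
  - pose proof (gsq_lt_id a Ha); lra.
  - pose proof (gsq_ge_id b ltac:(unfold b; lra)); unfold b in *; lra.
  - exists z; split; lra.
Qed.

Lemma g_unique_root c : 0 < c ->
  exists x, 0 < x /\ g x = c /\ forall y, 0 <= y -> g y = c -> y = x.
Proof.
  intros Hc; destruct (gsq_surjective (c * c)) as [x [Hx Hgx]]; [nra|].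
  assert (Hroot : g x = c) by (rewrite g_sqrt_gsq, Hgx by lra; apply sqrt_square; lra).
  exists x; repeat split; auto.
  intros y Hy Hgy; destruct (Req_dec y 0) as [->|Hy0].
  - unfold g in Hgy; destruct (Req_EM_T 0 0); lra.
  - destruct (Rtotal_order y x) as [Hlt|[Heq|Hgt]]; auto.
    + pose proof (g_increasing y x ltac:(lra) Hlt); lra.
    + pose proof (g_increasing x y Hx Hgt); lra.
Qed.

Definition perspective (Rr K : R) : R := K * (pow2 (Rr / K) - 1).

Lemma perspective_pos Rr K : 0 < Rr -> 0 < K -> 0 < perspective Rr K.
Proof.
  intros HR HK; pose proof (pow2_gt_1 (Rr / K) (Rdiv_lt_0_compat _ _ HR HK)).
  unfold perspective; nra.
Qed.

Lemma is_derive_perspective Rr K : K <> 0 ->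
  is_derive (perspective Rr) K (- g_factor (Rr / K)).
Proof.
  intros HK; unfold perspective, g_factor, pow2, Rpower; auto_derive; [easy|unfold Rdiv; field; easy].
Qed.

Lemma g_perspective Rr K : 0 < Rr -> 0 < K ->
  g (Rr / K) = sqrt Rr * g_factor (Rr / K) / sqrt (perspective Rr K).
Proof.
  intros HR HK; assert (Hx : 0 < Rr / K) by (apply Rdiv_lt_0_compat; lra).
  pose proof (pow2_gt_1 _ Hx); pose proof (perspective_pos Rr K HR HK).
  unfold g, g_factor; destruct (Req_EM_T (Rr / K) 0) as [?|_]; [lra|].
  replace (Rr / K / (pow2 (Rr / K) - 1)) with (Rr / perspective Rr K)
    by (unfold perspective; field; lra).
  rewrite sqrt_div_alt by lra; pose proof (sqrt_lt_R0 _ H0); field; lra.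
Qed.

Lemma is_derive_sqrt_perspective Rr K : 0 < Rr -> 0 < K ->
  is_derive (fun K => sqrt (perspective Rr K)) K (- g (Rr / K) / (2 * sqrt Rr)).
Proof.
  intros HR HK; pose proof (sqrt_lt_R0 _ (perspective_pos Rr K HR HK)).
  pose proof (sqrt_lt_R0 _ HR).
  rewrite g_perspective by lra.
  replace (- (sqrt Rr * g_factor (Rr / K) / sqrt (perspective Rr K)) / (2 * sqrt Rr))
    with (- g_factor (Rr / K) / (2 * sqrt (perspective Rr K))) by (field; lra).
  apply is_derive_sqrt; [apply is_derive_perspective; lra | apply perspective_pos; lra].
Qed.

Lemma lt_div_comm a b c : 0 < a -> 0 < b -> a < c / b -> b < c / a.
Proof.
  intros Ha Hb Habc.
  assert (c / b * b = c) by (field; lra); assert (c / a * a = c) by (field; lra).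
  nra.
Qed.

Lemma div_lt_comm a b c : 0 < a -> 0 < b -> c / b < a -> c / a < b.
Proof.
  intros Ha Hb Habc.
  assert (c / b * b = c) by (field; lra); assert (c / a * a = c) by (field; lra).
  nra.
Qed.

Section LowerCost.

Variables Rr beta gamma x0 : R.
Hypotheses (HR : 0 < Rr) (Hbeta : 0 < beta) (Hx0 : 0 < x0)
  (Hgx0 : g x0 = gamma * sqrt Rr / beta).

Definition lower_cost (K : R) : R := 2 * beta * sqrt (perspective Rr K) + gamma * K.

Lemma is_derive_lower_cost K : 0 < K ->
  is_derive lower_cost K (beta / sqrt Rr * (g x0 - g (Rr / K))).
Proof.
  intros HK; pose proof (sqrt_lt_R0 _ HR).
  replace (beta / sqrt Rr * (g x0 - g (Rr / K)))
    with (2 * beta * (- g (Rr / K) / (2 * sqrt Rr)) + gamma * 1) by (rewrite Hgx0; field; lra).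
  apply (is_derive_plus (fun K => 2 * beta * sqrt (perspective Rr K)) (fun K => gamma * K)).
  - apply is_derive_scal, is_derive_sqrt_perspective; lra.
  - auto_derive; [easy|ring].
Qed.

Lemma lower_cost_decreasing a b : 0 < a -> a < b -> b <= Rr / x0 -> lower_cost b < lower_cost a.
Proof.
  intros Ha Hab Hb; pose proof (sqrt_lt_R0 _ HR).
  apply (derive_neg_decreasing _ (fun K => beta / sqrt Rr * (g x0 - g (Rr / K))) a b Hab).
  - intros c Hc; apply is_derive_lower_cost; lra.
  - intros c Hc.
    assert (Hc0 : x0 < Rr / c) by (apply lt_div_comm; lra).
    pose proof (g_increasing x0 (Rr / c) Hx0 Hc0).
    assert (0 < beta / sqrt Rr) by (apply Rdiv_lt_0_compat; lra); nra.
Qed.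

Lemma lower_cost_increasing a b : Rr / x0 <= a -> a < b -> lower_cost a < lower_cost b.
Proof.
  intros Ha Hab; pose proof (sqrt_lt_R0 _ HR).
  assert (0 < Rr / x0) by (apply Rdiv_lt_0_compat; lra).
  apply (derive_pos_increasing _ (fun K => beta / sqrt Rr * (g x0 - g (Rr / K))) a b Hab).
  - intros c Hc; apply is_derive_lower_cost; lra.
  - intros c Hc.
    assert (Hc0 : Rr / c < x0) by (apply div_lt_comm; lra).
    assert (HRc : 0 < Rr / c) by (apply Rdiv_lt_0_compat; lra).
    pose proof (g_increasing (Rr / c) x0 HRc Hc0).
    assert (0 < beta / sqrt Rr) by (apply Rdiv_lt_0_compat; lra); nra.
Qed.

End LowerCost.

Lemma clamp_mem k0 a b : a <= b -> a <= Rmax (Rmin k0 b) a <= b.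
Proof.
  intros Hab; split; [apply Rmax_r|].
  apply Rmax_lub; [apply Rmin_r|exact Hab].
Qed.

Lemma clamp_strict_argmin (f : R -> R) k0 a b : a <= b ->
  (forall x y, a <= x -> x < y -> y <= k0 -> f y < f x) ->
  (forall x y, k0 <= x -> x < y -> f x < f y) ->
  forall K, a <= K <= b -> K <> Rmax (Rmin k0 b) a -> f (Rmax (Rmin k0 b) a) < f K.
Proof.
  intros Hab Hdec Hinc K HK HK0.
  destruct (Rle_lt_dec k0 a) as [Hk0a|Hak0].
  - rewrite Rmax_right in * by (pose proof (Rmin_l k0 b); lra).
    apply Hinc; lra.
  - destruct (Rle_lt_dec b k0) as [Hbk0|Hk0b].
    + rewrite Rmin_right, Rmax_left in * by lra.
      apply Hdec; lra.
    + rewrite Rmin_left, Rmax_left in * by lra.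
      destruct (Rtotal_order K k0) as [HKk0|[HKk0|HKk0]]; [apply Hdec|lra|apply Hinc]; lra.
Qed.

Section Csi.

Variables alpha rho_r rho_d rho_s Rr : R.
Hypotheses (Ha : 0 < alpha) (Hr : 0 < rho_r) (Hd : 0 < rho_d) (Hs : 0 < rho_s) (HR : 0 < Rr).

Let cost := lower_cost Rr (sqrt alpha * sqrt rho_r) (rho_r + rho_d).

Lemma threshold_eq :
  (1 + rho_d / rho_r) * sqrt (Rr * rho_r / alpha)
  = (rho_r + rho_d) * sqrt Rr / (sqrt alpha * sqrt rho_r).
Proof.
  pose proof (sqrt_lt_R0 _ Ha); pose proof (sqrt_lt_R0 _ Hr).
  rewrite sqrt_div_alt, sqrt_mult_alt by lra.
  replace (1 + rho_d / rho_r) with ((rho_r + rho_d) / (sqrt rho_r * sqrt rho_r))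
    by (rewrite sqrt_sqrt by lra; field; lra).
  field; lra.
Qed.

(* AM-GM in [M - K], written as an identity with an explicit nonnegative remainder. *)
Lemma Rr_mul_inv_zeta_csi M K : 0 < K -> K < M ->
  Rr * inv_zeta_csi alpha rho_r rho_d rho_s M K Rr
  = cost K + rho_s
    + (sqrt alpha * sqrt (perspective Rr K) - sqrt rho_r * (M - K)) ^ 2 / (M - K).
Proof.
  intros HK HKM; pose proof (perspective_pos Rr K HR HK).
  unfold inv_zeta_csi, cost, lower_cost.
  replace (alpha * K / (M - K) * (pow2 (Rr / K) - 1))
    with ((sqrt alpha * sqrt (perspective Rr K)) ^ 2 / (M - K))
    by (rewrite Rpow_mult_distr, !pow2_sqrt by lra; unfold perspective; field; lra).
  replace (M * rho_r) with (sqrt rho_r ^ 2 * (M - K) + rho_r * K)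
    by (rewrite pow2_sqrt by lra; ring).
  field; lra.
Qed.

Lemma M'_csi_sub K : 0 < K ->
  M'_csi alpha rho_r K Rr - K = sqrt alpha * sqrt (perspective Rr K) / sqrt rho_r.
Proof.
  intros HK; pose proof (sqrt_lt_R0 _ Hr).
  pose proof (pow2_gt_1 (Rr / K) (Rdiv_lt_0_compat _ _ HR HK)).
  unfold M'_csi, perspective.
  rewrite sqrt_div_alt, !sqrt_mult_alt by lra.
  field; lra.
Qed.

Lemma M'_csi_gt K : 0 < K -> K < M'_csi alpha rho_r K Rr.
Proof.
  intros HK; pose proof (M'_csi_sub K HK).
  pose proof (sqrt_lt_R0 _ Ha); pose proof (sqrt_lt_R0 _ Hr).
  pose proof (sqrt_lt_R0 _ (perspective_pos Rr K HR HK)).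
  assert (0 < sqrt alpha * sqrt (perspective Rr K) / sqrt rho_r)
    by (apply Rdiv_lt_0_compat; nra).
  lra.
Qed.

Lemma cost_pos K : 0 < K -> 0 < cost K.
Proof.
  intros HK; pose proof (sqrt_lt_R0 _ Ha); pose proof (sqrt_lt_R0 _ Hr).
  assert (0 <= sqrt alpha * sqrt rho_r * sqrt (perspective Rr K))
    by (pose proof (sqrt_pos (perspective Rr K)); apply Rmult_le_pos; nra).
  unfold cost, lower_cost; nra.
Qed.

Lemma inv_zeta_csi_ge M K : 0 < K -> K < M ->
  cost K + rho_s <= Rr * inv_zeta_csi alpha rho_r rho_d rho_s M K Rr.
Proof.
  intros HK HKM; rewrite Rr_mul_inv_zeta_csi by lra.
  assert (0 <= (sqrt alpha * sqrt (perspective Rr K) - sqrt rho_r * (M - K)) ^ 2 / (M - K))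
    by (apply Rmult_le_pos; [apply pow2_ge_0|apply Rlt_le, Rinv_0_lt_compat; lra]).
  lra.
Qed.

Lemma inv_zeta_csi_M'_csi K : 0 < K ->
  Rr * inv_zeta_csi alpha rho_r rho_d rho_s (M'_csi alpha rho_r K Rr) K Rr = cost K + rho_s.
Proof.
  intros HK; pose proof (M'_csi_gt K HK); pose proof (M'_csi_sub K HK).
  pose proof (sqrt_lt_R0 _ Hr).
  rewrite Rr_mul_inv_zeta_csi, H0 by lra.
  replace (sqrt alpha * sqrt (perspective Rr K)
           - sqrt rho_r * (sqrt alpha * sqrt (perspective Rr K) / sqrt rho_r)) with 0
    by (field; lra).
  unfold Rdiv; ring.
Qed.

Lemma inv_zeta_csi_eq_M'_csi M K : 0 < K -> K < M ->
  Rr * inv_zeta_csi alpha rho_r rho_d rho_s M K Rr = cost K + rho_s ->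
  M = M'_csi alpha rho_r K Rr.
Proof.
  intros HK HKM Heq; rewrite Rr_mul_inv_zeta_csi in Heq by lra.
  pose proof (M'_csi_sub K HK); pose proof (sqrt_lt_R0 _ Hr).
  set (d := sqrt alpha * sqrt (perspective Rr K) - sqrt rho_r * (M - K)) in Heq.
  assert (Hd0 : d = 0).
  { assert (d ^ 2 / (M - K) * (M - K) = 0) by (replace (d ^ 2 / (M - K)) with 0 by lra; ring).
    replace (d ^ 2 / (M - K) * (M - K)) with (d * d) in H1 by (field; lra).
    destruct (Rmult_integral _ _ H1); lra. }
  assert (M - K = sqrt alpha * sqrt (perspective Rr K) / sqrt rho_r).
  { unfold d in Hd0; apply (Rmult_eq_reg_l (sqrt rho_r)); [field_simplify; lra|lra]. }
  lra.
Qed.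

Lemma inv_zeta_csi_pos M K : 0 < K -> K < M -> 0 < inv_zeta_csi alpha rho_r rho_d rho_s M K Rr.
Proof.
  intros HK HKM; pose proof (inv_zeta_csi_ge M K HK HKM); pose proof (cost_pos K HK).
  apply (Rmult_lt_reg_l Rr); lra.
Qed.

Lemma zeta_csi_le_iff M K M0 K0 : 0 < K -> K < M -> 0 < K0 -> K0 < M0 ->
  zeta_csi alpha rho_r rho_d rho_s M K Rr <= zeta_csi alpha rho_r rho_d rho_s M0 K0 Rr <->
  Rr * inv_zeta_csi alpha rho_r rho_d rho_s M0 K0 Rr <= Rr * inv_zeta_csi alpha rho_r rho_d rho_s M K Rr.
Proof.
  intros HK HKM HK0 HKM0; unfold zeta_csi.
  pose proof (inv_zeta_csi_pos M K HK HKM); pose proof (inv_zeta_csi_pos M0 K0 HK0 HKM0).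
  split; intros Hle.
  - apply Rmult_le_compat_l; [lra|].
    rewrite <- (Rinv_inv (inv_zeta_csi _ _ _ _ M K Rr)), <- (Rinv_inv (inv_zeta_csi _ _ _ _ M0 K0 Rr)).
    apply Rinv_le_contravar; [apply Rinv_0_lt_compat; lra|exact Hle].
  - apply Rinv_le_contravar; [lra|]; apply (Rmult_le_reg_l Rr); lra.
Qed.

Lemma inv_zeta_csi_argmin K0 a b : 0 < a -> a <= K0 <= b ->
  (forall K, a <= K <= b -> K <> K0 -> cost K0 < cost K) ->
  forall M K, a <= K <= b -> K < M ->
  Rr * inv_zeta_csi alpha rho_r rho_d rho_s (M'_csi alpha rho_r K0 Rr) K0 Rr
    <= Rr * inv_zeta_csi alpha rho_r rho_d rho_s M K Rr /\
  (Rr * inv_zeta_csi alpha rho_r rho_d rho_s M K Rr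
     <= Rr * inv_zeta_csi alpha rho_r rho_d rho_s (M'_csi alpha rho_r K0 Rr) K0 Rr ->
   M = M'_csi alpha rho_r K0 Rr /\ K = K0).
Proof.
  intros Ha0 HK0 Hmin M K HK HKM.
  rewrite inv_zeta_csi_M'_csi by lra.
  pose proof (inv_zeta_csi_ge M K ltac:(lra) HKM).
  assert (Hcost : cost K0 <= cost K)
    by (destruct (Req_dec K K0) as [->|HKK0]; [|pose proof (Hmin K HK HKK0)]; lra).
  split; [lra|intros Hle].
  assert (HKK0 : K = K0)
    by (destruct (Req_dec K K0) as [|HKK0]; [easy|pose proof (Hmin K HK HKK0); lra]).
  subst K; split; [apply inv_zeta_csi_eq_M'_csi; lra|easy].
Qed.

End Csi.

Theorem theorem8 (Rr alpha rho_r rho_d rho_s rho_0 T : R)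
  (hR : 0 < Rr) (ha : 1 < alpha) (hr : 0 < rho_r) (hd : 0 < rho_d)
  (hs : 0 < rho_s) (h0 : 0 < rho_0) (hT : 1 < T) :
  exists x' : R,
    (0 <= x' /\ g x' = (1 + rho_d / rho_r) * sqrt (Rr * rho_r / alpha)) /\
    (forall y : R, 0 <= y -> g y = (1 + rho_d / rho_r) * sqrt (Rr * rho_r / alpha) -> y = x') /\
    (10 < K_max rho_r rho_d rho_0 T ->
     let Kmax := K_max rho_r rho_d rho_0 T in
     let K' := K'_csi x' Rr Kmax in
     let M' := M'_csi alpha rho_r K' Rr in
     (1 <= K' <= Kmax /\ K' < M') /\
     (forall M K : R, 1 <= K <= Kmax -> K < M ->
        zeta_csi alpha rho_r rho_d rho_s M K Rr <= zeta_csi alpha rho_r rho_d rho_s M' K' Rr) /\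
     (forall M K : R, 1 <= K <= Kmax -> K < M ->
        zeta_csi alpha rho_r rho_d rho_s M' K' Rr <= zeta_csi alpha rho_r rho_d rho_s M K Rr ->
        M = M' /\ K = K')).
Proof.
  assert (Hbeta : 0 < sqrt alpha * sqrt rho_r)
    by (apply Rmult_lt_0_compat; apply sqrt_lt_R0; lra).
  assert (Hc : 0 < (1 + rho_d / rho_r) * sqrt (Rr * rho_r / alpha)).
  { rewrite threshold_eq by lra; apply Rdiv_lt_0_compat; [|lra].
    pose proof (sqrt_lt_R0 _ hR); nra. }
  destruct (g_unique_root _ Hc) as (x' & Hx' & Hgx' & Huniq).
  exists x'; split; [split; lra|split; [exact Huniq|]].
  intros HKmax Kmax K' M'; fold Kmax in HKmax.
  rewrite threshold_eq in Hgx' by lra.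
  assert (HK' : 1 <= K' <= Kmax) by (apply clamp_mem; lra).
  assert (Hcost : forall K, 1 <= K <= Kmax -> K <> K' ->
    lower_cost Rr (sqrt alpha * sqrt rho_r) (rho_r + rho_d) K'
    < lower_cost Rr (sqrt alpha * sqrt rho_r) (rho_r + rho_d) K).
  { apply clamp_strict_argmin; [lra|intros x y Hx Hxy Hy|intros x y Hx Hxy];
      [eapply lower_cost_decreasing|eapply lower_cost_increasing]; eauto; lra. }
  pose proof (inv_zeta_csi_argmin alpha rho_r rho_d rho_s Rr ltac:(lra) hr hR
                K' 1 Kmax ltac:(lra) HK' Hcost) as Hargmin.
  assert (HM' : K' < M') by (apply M'_csi_gt; lra).
  split; [easy|split]; intros M K HK HKM; rewrite zeta_csi_le_iff by lra.
  - exact (proj1 (Hargmin M K HK HKM)).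
  - exact (proj2 (Hargmin M K HK HKM)).
Qed.
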